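(* Let $a=1/4$, $d=3/4$, $e=1/2$. Let $U_1$ be the uninorm on $[0,1]$ defined by $U_1(p,q)=1$ if $\max(p,q)=1$; $U_1(p,q)=0$ if $\min(p,q)=0$ and $\max(p,q)<1$; and $U_1(p,q)=\big(\min(p^{2^{-n}},q^{2^{-m}})\big)^{2^{n+m}}$ if $p\in\,]2^{-2^{n+1}},2^{-2^{n}}]$, $q\in\,]2^{-2^{m+1}},2^{-2^{m}}]$, $n,m\in\mathbb{Z}$. Let $U_1^*(x,y)=\tfrac14+\tfrac12U_1(2(x-\tfrac14),2(y-\tfrac14))$ for $x,y\in\,]\tfrac14,\tfrac34[$. Let $$f(s)=\begin{cases}4s^2 & s\le \tfrac14,\\ 2(s-\tfrac14)^2+\tfrac14 & s\in\,]\tfrac14,\tfrac34[,\\ 4(s-\tfrac34)^2+\tfrac34 & s\ge\tfrac34,\end{cases}$$ with iterates $f^{(n)}$, $n\in\mathbb{Z}$ (so $f^{(n)}(s)=\tfrac14(4s)^{2^n}$ for $s\le\tfrac14$, $\tfrac14+\tfrac12(2(s-\tfrac14))^{2^n}$ for $s\in\,]\tfrac14,\tfrac34[$, $\tfrac34+\tfrac14(4(s-\tfrac34))^{2^n}$ for $s\ge\tfrac34$). Define $U:[0,1]^2\to[0,1]$ by $$U(x,y)=\begin{cases}1 & \max(x,y)=1,\\ 0 & x,y\in[0,a],\\ 1 & x,y\in[d,1[,\\ d & (x,y)\in[0,a]\times[d,1[\ \cup\ [d,1[\times[0,a],\\ f^{(n)}(x) & x\in[0,a]\cup[d,1[,\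 y\in\,]f^{(n+1)}(e),f^{(n)}(e)],\ n\in\mathbb{Z},\\ f^{(n)}(y) & y\in[0,a]\cup[d,1[,\ x\in\,]f^{(n+1)}(e),f^{(n)}(e)],\ n\in\mathbb{Z},\\ U_1^*(x,y) & x,y\in\,]a,d[.\end{cases}$$ Then $U$ is a disjunctive uninorm with neutral element $1/2$.
   Context: A uninorm is a map $U:[0,1]^2\to[0,1]$ that is commutative, associative, non-decreasing in each variable, and has a neutral element $e\in[0,1]$; it is disjunctive if $U(1,0)=1$. For a continuous strictly increasing bijection $f:[0,1]\to[0,1]$: $f^{(0)}=\mathrm{id}$, $f^{(n)}=f\circ f^{(n-1)}$ and $f^{(-n)}=f^{-1}\circ f^{(-n+1)}$ for $n\in\mathbb{N}$. The intervals $]f^{(n+1)}(1/2),f^{(n)}(1/2)]$, $n\in\mathbb{Z}$, partition $]1/4,3/4[$. *)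

From Stdlib Require Import Reals Lra ZArith Bool ClassicalEpsilon.
Open Scope R_scope.
Local Open Scope bool_scope.

Definition in01 (x : R) : Prop := 0 <= x <= 1.

Definition is_uninorm (U : R -> R -> R) (e : R) : Prop :=
  (forall x y, in01 x -> in01 y -> in01 (U x y)) /\
  (forall x y, in01 x -> in01 y -> U x y = U y x) /\
  (forall x y z, in01 x -> in01 y -> in01 z -> U (U x y) z = U x (U y z)) /\
  (forall x1 x2 y, in01 x1 -> in01 x2 -> in01 y -> x1 <= x2 -> U x1 y <= U x2 y) /\
  (forall x y1 y2, in01 x -> in01 y1 -> in01 y2 -> y1 <= y2 -> U x y1 <= U x y2) /\
  in01 e /\
  (forall x, in01 x -> U e x = x /\ U x e = x).

Definition disjunctive_uninorm (U : R -> R -> R) (e : R) : Prop :=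
  is_uninorm U e /\ U 1 0 = 1.

Definition Rleb (x y : R) : bool := if Rle_dec x y then true else false.
Definition Rltb (x y : R) : bool := if Rlt_dec x y then true else false.
Definition Reqb (x y : R) : bool := if Req_EM_T x y then true else false.

Definition U1_band (n : Z) (p : R) : Prop :=
  Rpower 2 (- powerRZ 2 (n + 1)) < p /\ p <= Rpower 2 (- powerRZ 2 n).

(* the integer n with p in the n-th band (unique for p in ]0,1[) *)
Definition U1_idx (p : R) : Z := epsilon (inhabits 0%Z) (fun n => U1_band n p).

Definition U1 (p q : R) : R :=
  if Reqb (Rmax p q) 1 then 1
  else if Reqb (Rmin p q) 0 then 0
  else
    let n := U1_idx p in
    let m := U1_idx q in
    Rpower (Rmin (Rpower p (powerRZ 2 (- n))) (Rpower q (powerRZ 2 (- m))))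
           (powerRZ 2 (n + m)).

Definition U1star (x y : R) : R :=
  1/4 + 1/2 * U1 (2 * (x - 1/4)) (2 * (y - 1/4)).

Definition f (s : R) : R :=
  if Rleb s (1/4) then 4 * s ^ 2
  else if Rltb s (3/4) then 2 * (s - 1/4) ^ 2 + 1/4
  else 4 * (s - 3/4) ^ 2 + 3/4.

Definition finv (y : R) : R :=
  epsilon (inhabits 0) (fun x => in01 x /\ f x = y).

Definition fiter (n : Z) : R -> R :=
  match n with
  | Z0 => fun s => s
  | Zpos p => fun s => Nat.iter (Pos.to_nat p) f s
  | Zneg p => fun s => Nat.iter (Pos.to_nat p) finv s
  end.

Definition a_ : R := 1/4.
Definition d_ : R := 3/4.
Definition e_ : R := 1/2.

Definition f_band (n : Z) (y : R) : Prop :=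
  fiter (n + 1) e_ < y /\ y <= fiter n e_.

Definition f_idx (y : R) : Z := epsilon (inhabits 0%Z) (fun n => f_band n y).

Definition inA (x : R) : bool := Rleb 0 x && Rleb x a_.
Definition inD (x : R) : bool := Rleb d_ x && Rltb x 1.
Definition inMid (x : R) : bool := Rltb a_ x && Rltb x d_.

Definition U (x y : R) : R :=
  if Reqb (Rmax x y) 1 then 1
  else if inA x && inA y then 0
  else if inD x && inD y then 1
  else if (inA x && inD y) || (inD x && inA y) then d_
  else if (inA x || inD x) && inMid y then fiter (f_idx y) x
  else if (inA y || inD y) && inMid x then fiter (f_idx x) y
  else U1star x y.

(* On ]1/4,3/4[ the coordinate t with y = 1/4 + 2^(-2^t)/2 (mid_coord, inverse mid_pt)
   turns f into t |-> t + 1, the band ]f^(n+1)(e), f^(n)(e)] into [n, n+1[, and U1* into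
   Glin s t = max(s + floor t, t + floor s): integer parts add and fractional parts take the
   maximum, so Glin is commutative, associative, monotone, with neutral element 0, the
   coordinate of e.  On [0,1/4] and [3/4,1[ the iterates f^(n) form an order-preserving
   Z-action, antitone in n, fixing 0 and 3/4.  With these normal forms on the pieces
   [0,1/4], ]1/4,3/4[, [3/4,1[ and {1}, each uninorm axiom is a finite case check. *)
From Stdlib Require Import Reals Lra Lia ZArith ClassicalEpsilon.
Open Scope R_scope.

Lemma Rleb_true x y : x <= y -> Rleb x y = true.
Proof. unfold Rleb; destruct (Rle_dec x y); auto; lra. Qed.

Lemma Rleb_false x y : y < x -> Rleb x y = false.
Proof. unfold Rleb; destruct (Rle_dec x y); auto; lra. Qed.

Lemma Rltb_true x y : x < y -> Rltb x y = true.
Proof. unfold Rltb; destruct (Rlt_dec x y); auto; lra. Qed.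

Lemma Rltb_false x y : y <= x -> Rltb x y = false.
Proof. unfold Rltb; destruct (Rlt_dec x y); auto; lra. Qed.

Lemma Reqb_refl x : Reqb x x = true.
Proof. unfold Reqb; destruct (Req_EM_T x x); auto; lra. Qed.

Lemma Reqb_false x y : x <> y -> Reqb x y = false.
Proof. unfold Reqb; destruct (Req_EM_T x y); auto; lra. Qed.

Lemma epsilon_unique {A : Type} (i : inhabited A) (P : A -> Prop) (a : A) :
  (forall b, P b <-> b = a) -> epsilon i P = a.
Proof.
  intro HP; apply HP, (epsilon_spec i P).
  exists a; apply HP; reflexivity.
Qed.

Lemma Int_part_iff (n : Z) (r : R) : IZR n <= r < IZR n + 1 <-> n = Int_part r.
Proof.
  split; intro H.
  - apply Int_part_spec; lra.
  - subst n; destruct (base_Int_part r); lra.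
Qed.

Lemma Int_part_le_compat (r s : R) : r <= s -> (Int_part r <= Int_part s)%Z.
Proof.
  intro H; destruct (base_Int_part r), (base_Int_part s).
  assert (Hlt : IZR (Int_part r) < IZR (Int_part s + 1)) by (rewrite plus_IZR; lra).
  apply lt_IZR in Hlt; lia.
Qed.

Lemma Int_part_0 : Int_part 0 = 0%Z.
Proof. symmetry; apply Int_part_iff; simpl; lra. Qed.

Lemma f_in01 x : in01 x -> in01 (f x).
Proof.
  unfold in01, f, Rleb, Rltb; intros H.
  destruct (Rle_dec x (1/4)); [|destruct (Rlt_dec x (3/4))]; nra.
Qed.

Lemma f_increasing x y : in01 x -> in01 y -> x < y -> f x < f y.
Proof.
  unfold in01, f, Rleb, Rltb; intros Hx Hy H.
  destruct (Rle_dec x (1/4)); [|destruct (Rlt_dec x (3/4))];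
  destruct (Rle_dec y (1/4)); try destruct (Rlt_dec y (3/4)); nra.
Qed.

Lemma f_lt_iff x y : in01 x -> in01 y -> (x < y <-> f x < f y).
Proof.
  intros Hx Hy; split; [now apply f_increasing|].
  intro H; destruct (Rlt_le_dec x y) as [|[Hyx|<-]]; auto.
  - pose proof (f_increasing y x Hy Hx Hyx); lra.
  - lra.
Qed.

Lemma f_le_iff x y : in01 x -> in01 y -> (x <= y <-> f x <= f y).
Proof. intros Hx Hy; pose proof (f_lt_iff y x Hy Hx); lra. Qed.

Lemma f_onto y : in01 y -> exists x, in01 x /\ f x = y.
Proof.
  unfold in01; intros Hy; unfold f, Rleb, Rltb.
  destruct (Rle_dec y (1/4)); [|destruct (Rlt_dec y (3/4))].
  - exists (sqrt y / 2).
    pose proof (sqrt_sqrt y ltac:(lra)); pose proof (sqrt_pos y).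
    assert (sqrt y <= 1/2) by nra.
    destruct (Rle_dec (sqrt y / 2) (1/4)); [split; nra | nra].
  - pose proof (sqrt_sqrt ((y - 1/4) / 2) ltac:(lra)).
    pose proof (sqrt_lt_R0 ((y - 1/4) / 2) ltac:(lra)).
    set (s := sqrt ((y - 1/4) / 2)) in *; exists (1/4 + s).
    assert (s < 1/2) by nra.
    destruct (Rle_dec (1/4 + s) (1/4)); [lra|].
    destruct (Rlt_dec (1/4 + s) (3/4)); [split; nra | nra].
  - exists (3/4 + sqrt (y - 3/4) / 2).
    pose proof (sqrt_sqrt (y - 3/4) ltac:(lra)); pose proof (sqrt_pos (y - 3/4)).
    assert (sqrt (y - 3/4) <= 1/2) by nra.
    destruct (Rle_dec (3/4 + sqrt (y - 3/4) / 2) (1/4)); [lra|].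
    destruct (Rlt_dec (3/4 + sqrt (y - 3/4) / 2) (3/4)); [lra | split; nra].
Qed.

Lemma finv_spec y : in01 y -> in01 (finv y) /\ f (finv y) = y.
Proof. intro H; apply (epsilon_spec _ (fun x => in01 x /\ f x = y)), f_onto, H. Qed.

Lemma finv_f x : in01 x -> finv (f x) = x.
Proof.
  intro H; destruct (finv_spec (f x) (f_in01 x H)) as [Hin Hf].
  apply Rle_antisym; [apply (f_le_iff _ _ Hin H) | apply (f_le_iff _ _ H Hin)]; lra.
Qed.

Lemma finv_le_iff y1 y2 : in01 y1 -> in01 y2 -> (y1 <= y2 <-> finv y1 <= finv y2).
Proof.
  intros H1 H2; destruct (finv_spec y1 H1) as [A1 B1], (finv_spec y2 H2) as [A2 B2].
  rewrite (f_le_iff _ _ A1 A2), B1, B2; tauto.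
Qed.

Lemma f_0 : f 0 = 0.
Proof. unfold f; rewrite Rleb_true by lra; lra. Qed.

Lemma f_1_4 : f (1/4) = 1/4.
Proof. unfold f; rewrite Rleb_true by lra; lra. Qed.

Lemma f_3_4 : f (3/4) = 3/4.
Proof. unfold f; rewrite Rleb_false, Rltb_false by lra; lra. Qed.

Lemma f_1 : f 1 = 1.
Proof. unfold f; rewrite Rleb_false, Rltb_false by lra; lra. Qed.

Lemma fiter_preserves (P : R -> Prop) :
  (forall y, P y -> P (f y)) -> (forall y, P y -> P (finv y)) ->
  forall n x, P x -> P (fiter n x).
Proof.
  intros Hf Hinv n x Hx; destruct n; simpl; auto;
    induction (Pos.to_nat p); simpl; auto.
Qed.

Lemma fiter_in01 n x : in01 x -> in01 (fiter n x).
Proof. apply fiter_preserves; [apply f_in01 | now intros; apply finv_spec]. Qed.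

Lemma fiter_succ n x : in01 x -> fiter (Z.succ n) x = f (fiter n x).
Proof.
  intro Hx; destruct n as [|p|p].
  - reflexivity.
  - simpl; rewrite Pos.add_1_r, Pos2Nat.inj_succ; reflexivity.
  - assert (Hfinv : forall k, in01 (Nat.iter k finv x)).
    { induction k; simpl; auto; now apply finv_spec. }
    destruct (Pos.succ_pred_or p) as [->|<-].
    + symmetry; now apply finv_spec.
    + replace (Z.succ (Zneg (Pos.succ (Pos.pred p)))) with (Zneg (Pos.pred p)) by lia.
      simpl; rewrite Pos2Nat.inj_succ; simpl.
      symmetry; apply finv_spec, Hfinv.
Qed.

Lemma fiter_pred n x : in01 x -> fiter (Z.pred n) x = finv (fiter n x).
Proof.
  intro Hx; rewrite <- (Z.succ_pred n) at 2.
  rewrite fiter_succ, finv_f; auto using fiter_in01.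
Qed.

Lemma fiter_add n m x : in01 x -> fiter n (fiter m x) = fiter (n + m) x.
Proof.
  intro Hx; induction n using Z.peano_ind.
  - reflexivity.
  - rewrite Z.add_succ_l, !fiter_succ, IHn; auto using fiter_in01.
  - rewrite Z.add_pred_l, !fiter_pred, IHn; auto using fiter_in01.
Qed.

Lemma fiter_le_compat n x y : in01 x -> in01 y -> x <= y -> fiter n x <= fiter n y.
Proof.
  intros Hx Hy; induction n using Z.peano_ind; intro H.
  - exact H.
  - rewrite !fiter_succ by auto.
    apply (f_le_iff _ _ (fiter_in01 n x Hx) (fiter_in01 n y Hy)), IHn, H.
  - rewrite !fiter_pred by auto.
    apply (finv_le_iff _ _ (fiter_in01 n x Hx) (fiter_in01 n y Hy)), IHn, H.
Qed.

Lemma fiter_fixed c n : in01 c -> f c = c -> fiter n c = c.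
Proof.
  intros Hc Hfc; apply (fiter_preserves (fun y => y = c)); try intros y ->; auto.
  rewrite <- Hfc at 1; apply finv_f, Hc.
Qed.

Definition low (x : R) : Prop := 0 <= x <= 1/4.
Definition middle (x : R) : Prop := 1/4 < x < 3/4.
Definition high (x : R) : Prop := 3/4 <= x < 1.

Ltac pieces := unfold low, middle, high, in01 in *; lra.

Lemma in01_low x : low x -> in01 x. Proof. pieces. Qed.
Lemma in01_middle x : middle x -> in01 x. Proof. pieces. Qed.
Lemma in01_high x : high x -> in01 x. Proof. pieces. Qed.

Lemma in01_cases x : in01 x -> low x \/ middle x \/ high x \/ x = 1.
Proof.
  intro H; destruct (Rle_dec x (1/4)); [|destruct (Rlt_dec x (3/4))];
    [| |destruct (Req_dec x 1)]; pieces || tauto.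
Qed.

Lemma fiter_low n x : low x -> low (fiter n x).
Proof.
  apply fiter_preserves; intros y Hy.
  - pose proof (proj1 (f_le_iff 0 y ltac:(pieces) ltac:(pieces)) ltac:(pieces)).
    pose proof (proj1 (f_le_iff y (1/4) ltac:(pieces) ltac:(pieces)) ltac:(pieces)).
    rewrite f_0, f_1_4 in *; pieces.
  - destruct (finv_spec y ltac:(pieces)) as [Hin Hf].
    pose proof (proj2 (f_le_iff (finv y) (1/4) Hin ltac:(pieces))).
    rewrite f_1_4, Hf in *; pieces.
Qed.

Lemma fiter_high n x : high x -> high (fiter n x).
Proof.
  apply fiter_preserves; intros y Hy.
  - pose proof (proj1 (f_le_iff (3/4) y ltac:(pieces) ltac:(pieces)) ltac:(pieces)).
    pose proof (proj1 (f_lt_iff y 1 ltac:(pieces) ltac:(pieces)) ltac:(pieces)).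
    rewrite f_3_4, f_1 in *; pieces.
  - destruct (finv_spec y ltac:(pieces)) as [Hin Hf].
    pose proof (proj2 (f_le_iff (3/4) (finv y) ltac:(pieces) Hin)).
    pose proof (proj2 (f_lt_iff (finv y) 1 Hin ltac:(pieces))).
    rewrite f_3_4, f_1, Hf in *; pieces.
Qed.

Lemma f_le_side y : low y \/ high y -> f y <= y.
Proof.
  unfold f, Rleb, Rltb; intro Hy.
  destruct (Rle_dec y (1/4)); [|destruct (Rlt_dec y (3/4))]; unfold low, high in Hy; nra.
Qed.

Lemma fiter_antitone n m x : low x \/ high x -> (n <= m)%Z -> fiter m x <= fiter n x.
Proof.
  intros Hx Hnm.
  assert (Hstep : forall k, fiter (Z.succ k) x <= fiter k x).
  { intro k; rewrite fiter_succ by (destruct Hx; pieces).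
    apply f_le_side; destruct Hx; [left; apply fiter_low | right; apply fiter_high]; auto. }
  replace m with (n + Z.of_nat (Z.to_nat (m - n)))%Z by lia.
  induction (Z.to_nat (m - n)) as [|k IH]; [rewrite Z.add_0_r; lra|].
  rewrite Nat2Z.inj_succ, Z.add_succ_r; specialize (Hstep (n + Z.of_nat k)%Z); lra.
Qed.

Definition dexp (t : R) : R := Rpower 2 (- Rpower 2 t).
Definition dlog (p : R) : R := ln (- ln p / ln 2) / ln 2.

Lemma ln2_pos : 0 < ln 2.
Proof. rewrite <- ln_1; apply ln_increasing; lra. Qed.

Lemma dexp_pos t : 0 < dexp t.
Proof. apply exp_pos. Qed.

Lemma dexp_decreasing s t : s < t -> dexp t < dexp s.
Proof. intro H; apply Rpower_lt; [lra|]; apply Ropp_lt_contravar, Rpower_lt; lra. Qed.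

Lemma dexp_lt_iff s t : dexp s < dexp t <-> t < s.
Proof.
  split; [|apply dexp_decreasing].
  intro H; destruct (Rlt_le_dec t s) as [|[Hst|<-]]; auto.
  - pose proof (dexp_decreasing s t Hst); lra.
  - lra.
Qed.

Lemma dexp_le_iff s t : dexp s <= dexp t <-> t <= s.
Proof. pose proof (dexp_lt_iff t s); lra. Qed.

Lemma dexp_lt_1 t : dexp t < 1.
Proof.
  rewrite <- (Rpower_O 2) by lra; apply Rpower_lt; [lra|].
  pose proof (exp_pos (t * ln 2)); unfold Rpower; lra.
Qed.

Lemma dlog_dexp t : dlog (dexp t) = t.
Proof.
  pose proof ln2_pos; unfold dlog, dexp; rewrite ln_Rpower.
  replace (- (- Rpower 2 t * ln 2) / ln 2) with (Rpower 2 t) by (field; lra).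
  rewrite ln_Rpower; field; lra.
Qed.

Lemma dexp_dlog p : 0 < p < 1 -> dexp (dlog p) = p.
Proof.
  intro Hp; pose proof ln2_pos; unfold dlog, dexp, Rpower.
  assert (ln p < 0) by (rewrite <- ln_1; apply ln_increasing; lra).
  replace (ln (- ln p / ln 2) / ln 2 * ln 2) with (ln (- ln p / ln 2)) by (field; lra).
  rewrite exp_ln by (apply Rdiv_lt_0_compat; lra).
  replace (- (- ln p / ln 2) * ln 2) with (ln p) by (field; lra).
  apply exp_ln; lra.
Qed.

Lemma dexp_0 : dexp 0 = 1/2.
Proof.
  unfold dexp; rewrite Rpower_O by lra; unfold Rpower.
  rewrite Ropp_mult_distr_l_reverse, Rmult_1_l, exp_Ropp, exp_ln by lra; lra.
Qed.

Lemma Rpower_dexp t k : Rpower (dexp t) (powerRZ 2 k) = dexp (t + IZR k).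
Proof.
  unfold dexp; rewrite powerRZ_Rpower, Rpower_mult, Rpower_plus by lra.
  f_equal; ring.
Qed.

Lemma dexp_sqr t : dexp t * dexp t = dexp (t + 1).
Proof.
  unfold dexp; rewrite <- Rpower_plus, (Rpower_plus t 1 2), Rpower_1 by lra.
  f_equal; ring.
Qed.

Lemma dexp_IZR n : Rpower 2 (- powerRZ 2 n) = dexp (IZR n).
Proof. unfold dexp; rewrite powerRZ_Rpower by lra; reflexivity. Qed.

Definition mid_pt (t : R) : R := 1/4 + 1/2 * dexp t.
Definition mid_coord (y : R) : R := dlog (2 * (y - 1/4)).

Lemma middle_mid_pt t : middle (mid_pt t).
Proof. unfold middle, mid_pt; pose proof (dexp_pos t); pose proof (dexp_lt_1 t); lra. Qed.

Lemma mid_coord_pt t : mid_coord (mid_pt t) = t.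
Proof.
  unfold mid_coord, mid_pt.
  replace (2 * (1/4 + 1/2 * dexp t - 1/4)) with (dexp t) by field; apply dlog_dexp.
Qed.

Lemma mid_pt_coord y : middle y -> mid_pt (mid_coord y) = y.
Proof. unfold middle, mid_pt, mid_coord; intro H; rewrite dexp_dlog by lra; field. Qed.

Lemma mid_pt_lt_iff s t : mid_pt s < mid_pt t <-> t < s.
Proof. unfold mid_pt; pose proof (dexp_lt_iff s t); lra. Qed.

Lemma mid_pt_le_iff s t : mid_pt s <= mid_pt t <-> t <= s.
Proof. unfold mid_pt; pose proof (dexp_le_iff s t); lra. Qed.

Lemma mid_coord_antitone x y : middle x -> middle y -> x <= y -> mid_coord y <= mid_coord x.
Proof. intros Hx Hy H; apply mid_pt_le_iff; rewrite !mid_pt_coord; auto. Qed.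

Lemma mid_coord_half : mid_coord (1/2) = 0.
Proof.
  replace (1/2) with (mid_pt 0) by (unfold mid_pt; rewrite dexp_0; lra).
  apply mid_coord_pt.
Qed.

Lemma f_mid_pt t : f (mid_pt t) = mid_pt (t + 1).
Proof.
  pose proof (middle_mid_pt t) as H; unfold middle in H.
  unfold f; rewrite Rleb_false, Rltb_true by lra.
  unfold mid_pt; rewrite <- dexp_sqr; field.
Qed.

Lemma fiter_mid_pt n t : fiter n (mid_pt t) = mid_pt (t + IZR n).
Proof.
  assert (Hin : forall s, in01 (mid_pt s)) by (intro; apply in01_middle, middle_mid_pt).
  induction n using Z.peano_ind.
  - change (mid_pt t = mid_pt (t + 0)); f_equal; ring.
  - rewrite fiter_succ, IHn, f_mid_pt, succ_IZR by auto; f_equal; ring.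
  - rewrite fiter_pred, IHn by auto.
    replace (t + IZR n) with (t + IZR (Z.pred n) + 1)
      by (rewrite <- Z.sub_1_r, minus_IZR; ring).
    rewrite <- f_mid_pt; apply finv_f, Hin.
Qed.

Lemma fiter_middle n x : middle x -> middle (fiter n x).
Proof. intro H; rewrite <- (mid_pt_coord x H), fiter_mid_pt; apply middle_mid_pt. Qed.

Lemma f_idx_middle y : middle y -> f_idx y = Int_part (mid_coord y).
Proof.
  intro H; apply epsilon_unique; intro n.
  unfold f_band, e_; rewrite <- Int_part_iff.
  rewrite <- (mid_pt_coord y H) at 1 2.
  replace (1/2) with (mid_pt 0) by (unfold mid_pt; rewrite dexp_0; lra).
  rewrite !fiter_mid_pt, mid_pt_lt_iff, mid_pt_le_iff, plus_IZR; lra.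
Qed.

Definition Glin (s t : R) : R := Rmax (s + IZR (Int_part t)) (t + IZR (Int_part s)).

Lemma Glin_split s t :
  Glin s t = IZR (Int_part s) + IZR (Int_part t) + Rmax (frac_part s) (frac_part t).
Proof. unfold Glin, frac_part, Rmax; destruct (Rle_dec _ _), (Rle_dec _ _); lra. Qed.

Lemma Int_part_Glin s t : Int_part (Glin s t) = (Int_part s + Int_part t)%Z.
Proof.
  symmetry; apply Int_part_iff; rewrite Glin_split, plus_IZR.
  destruct (base_fp s), (base_fp t); unfold Rmax; destruct (Rle_dec _ _); lra.
Qed.

Lemma Glin_comm s t : Glin s t = Glin t s.
Proof. apply Rmax_comm. Qed.

Lemma Glin_assoc r s t : Glin (Glin r s) t = Glin r (Glin s t).
Proof.
  unfold Glin at 1 3; rewrite !Int_part_Glin, !plus_IZR; unfold Glin, Rmax.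
  repeat destruct (Rle_dec _ _); lra.
Qed.

Lemma Glin_le_compat_l r s t : r <= s -> Glin r t <= Glin s t.
Proof.
  intro H; pose proof (IZR_le _ _ (Int_part_le_compat _ _ H)); unfold Glin, Rmax.
  repeat destruct (Rle_dec _ _); lra.
Qed.

Lemma Glin_0_l t : Glin 0 t = t.
Proof.
  unfold Glin; rewrite Int_part_0; destruct (base_Int_part t).
  unfold Rmax; destruct (Rle_dec _ _); simpl in *; lra.
Qed.

Lemma U1_idx_dexp t : U1_idx (dexp t) = Int_part t.
Proof.
  apply epsilon_unique; intro n.
  unfold U1_band; rewrite <- Int_part_iff, !dexp_IZR, dexp_lt_iff, dexp_le_iff, plus_IZR.
  simpl; lra.
Qed.

Lemma Rmin_dexp s t : Rmin (dexp s) (dexp t) = dexp (Rmax s t).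
Proof.
  unfold Rmin, Rmax; destruct (Rle_dec (dexp s) (dexp t)) as [H|H], (Rle_dec s t) as [H'|H'];
    rewrite ?dexp_le_iff in H; auto.
  - f_equal; lra.
  - exfalso; apply H, dexp_le_iff; lra.
Qed.

Lemma U1_dexp s t : U1 (dexp s) (dexp t) = dexp (Glin s t).
Proof.
  pose proof (dexp_pos s); pose proof (dexp_pos t);
    pose proof (dexp_lt_1 s); pose proof (dexp_lt_1 t).
  unfold U1; rewrite !Reqb_false.
  2: assert (0 < Rmin (dexp s) (dexp t)) by (apply Rmin_glb_lt; lra); lra.
  2: assert (Rmax (dexp s) (dexp t) < 1) by (apply Rmax_lub_lt; lra); lra.
  rewrite !U1_idx_dexp, !Rpower_dexp, Rmin_dexp, Rpower_dexp, opp_IZR, opp_IZR, plus_IZR.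
  f_equal; unfold Glin, Rmax; repeat destruct (Rle_dec _ _); lra.
Qed.

Lemma U1star_middle x y :
  middle x -> middle y -> U1star x y = mid_pt (Glin (mid_coord x) (mid_coord y)).
Proof.
  intros Hx Hy; rewrite <- (mid_pt_coord x Hx), <- (mid_pt_coord y Hy), !mid_coord_pt.
  unfold U1star, mid_pt; rewrite <- U1_dexp; f_equal; f_equal; f_equal; field.
Qed.

Lemma U_1_l y : in01 y -> U 1 y = 1.
Proof. intro H; unfold U; rewrite Rmax_left, Reqb_refl by pieces; reflexivity. Qed.

Lemma U_1_r x : in01 x -> U x 1 = 1.
Proof. intro H; unfold U; rewrite Rmax_right, Reqb_refl by pieces; reflexivity. Qed.

Ltac select_branch_of_U :=
  intros; unfold U;
  rewrite Reqb_false by (apply Rlt_not_eq, Rmax_lub_lt; pieces);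
  unfold inA, inD, inMid, a_, d_, Rleb, Rltb;
  repeat (match goal with
          | |- context [Rle_dec ?a ?b] => destruct (Rle_dec a b)
          | |- context [Rlt_dec ?a ?b] => destruct (Rlt_dec a b)
          end; cbv beta iota delta [andb orb]; try (exfalso; pieces));
  try reflexivity.

Lemma U_low_low x y : low x -> low y -> U x y = 0.
Proof. select_branch_of_U. Qed.

Lemma U_high_high x y : high x -> high y -> U x y = 1.
Proof. select_branch_of_U. Qed.

Lemma U_low_high x y : low x -> high y -> U x y = 3/4.
Proof. select_branch_of_U. Qed.

Lemma U_high_low x y : high x -> low y -> U x y = 3/4.
Proof. select_branch_of_U. Qed.

Lemma U_low_middle x y : low x -> middle y -> U x y = fiter (Int_part (mid_coord y)) x.
Proof. select_branch_of_U; now rewrite f_idx_middle. Qed.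

Lemma U_high_middle x y : high x -> middle y -> U x y = fiter (Int_part (mid_coord y)) x.
Proof. select_branch_of_U; now rewrite f_idx_middle. Qed.

Lemma U_middle_low x y : middle x -> low y -> U x y = fiter (Int_part (mid_coord x)) y.
Proof. select_branch_of_U; now rewrite f_idx_middle. Qed.

Lemma U_middle_high x y : middle x -> high y -> U x y = fiter (Int_part (mid_coord x)) y.
Proof. select_branch_of_U; now rewrite f_idx_middle. Qed.

Lemma U_middle_middle x y :
  middle x -> middle y -> U x y = mid_pt (Glin (mid_coord x) (mid_coord y)).
Proof. select_branch_of_U; now apply U1star_middle. Qed.

Ltac piece_auto :=
  first [ assumption
        | apply fiter_low; piece_auto | apply fiter_high; piece_auto
        | apply fiter_middle; piece_auto | apply middle_mid_pt
        | apply fiter_in01; piece_auto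
        | apply in01_low; piece_auto | apply in01_high; piece_auto
        | apply in01_middle; piece_auto
        | pieces ].

(* Innermost first: the arguments are then already in normal form, so piece_auto can
   decide which piece they lie in. *)
Ltac rewrite_innermost_U :=
  match goal with
  | |- context [U ?a ?b] =>
    lazymatch a with context [U _ _] => fail | _ => idtac end;
    lazymatch b with context [U _ _] => fail | _ => idtac end;
    first [ rewrite (U_1_l b ltac:(piece_auto)) | rewrite (U_1_r a ltac:(piece_auto))
          | rewrite (U_low_low a b ltac:(piece_auto) ltac:(piece_auto))
          | rewrite (U_high_high a b ltac:(piece_auto) ltac:(piece_auto))
          | rewrite (U_low_high a b ltac:(piece_auto) ltac:(piece_auto))
          | rewrite (U_high_low a b ltac:(piece_auto) ltac:(piece_auto))
          | rewrite (U_low_middle a b ltac:(piece_auto) ltac:(piece_auto))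
          | rewrite (U_high_middle a b ltac:(piece_auto) ltac:(piece_auto))
          | rewrite (U_middle_low a b ltac:(piece_auto) ltac:(piece_auto))
          | rewrite (U_middle_high a b ltac:(piece_auto) ltac:(piece_auto))
          | rewrite (U_middle_middle a b ltac:(piece_auto) ltac:(piece_auto)) ]
  end.

Ltac normalize_U :=
  repeat first
    [ rewrite_innermost_U
    | rewrite (fiter_fixed 0 _ ltac:(pieces) f_0)
    | rewrite (fiter_fixed (3/4) _ ltac:(pieces) f_3_4)
    | rewrite mid_coord_pt | rewrite Int_part_Glin
    | match goal with
      | |- context [fiter ?n (fiter ?m ?x)] => rewrite (fiter_add n m x ltac:(piece_auto))
      end ].

Ltac case_pieces x Hx :=
  destruct (in01_cases x Hx) as [?|[?|[?|?]]]; [| | | subst x].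

Lemma U_in01 x y : in01 x -> in01 y -> in01 (U x y).
Proof. intros Hx Hy; case_pieces x Hx; case_pieces y Hy; normalize_U; piece_auto. Qed.

Lemma U_comm x y : in01 x -> in01 y -> U x y = U y x.
Proof.
  intros Hx Hy; case_pieces x Hx; case_pieces y Hy; normalize_U; try reflexivity.
  now rewrite Glin_comm.
Qed.

Lemma U_assoc x y z : in01 x -> in01 y -> in01 z -> U (U x y) z = U x (U y z).
Proof.
  intros Hx Hy Hz; case_pieces x Hx; case_pieces y Hy; case_pieces z Hz; normalize_U;
    try reflexivity; try (f_equal; ring); now rewrite Glin_assoc.
Qed.

Ltac assert_piece t :=
  first [ let h := fresh in assert (h : low t) by piece_auto
        | let h := fresh in assert (h : middle t) by piece_auto
        | let h := fresh in assert (h : high t) by piece_auto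
        | idtac ].

Ltac compare_normal_forms :=
  first [ apply fiter_le_compat; piece_auto
        | apply mid_pt_le_iff, Glin_le_compat_l, mid_coord_antitone; piece_auto
        | apply fiter_antitone;
          [ (left; piece_auto) || (right; piece_auto)
          | apply Int_part_le_compat, mid_coord_antitone; piece_auto ]
        | match goal with |- ?u <= ?v => assert_piece u; assert_piece v end; pieces ].

Lemma U_le_compat_l x1 x2 y :
  in01 x1 -> in01 x2 -> in01 y -> x1 <= x2 -> U x1 y <= U x2 y.
Proof.
  intros H1 H2 Hy H; case_pieces x1 H1; case_pieces x2 H2; try pieces;
    case_pieces y Hy; normalize_U; compare_normal_forms.
Qed.

Lemma U_half_l x : in01 x -> U (1/2) x = x.
Proof.
  intro Hx; assert (middle (1/2)) by pieces.
  case_pieces x Hx; normalize_U; rewrite ?mid_coord_half, ?Int_part_0; try reflexivity.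
  now rewrite Glin_0_l, mid_pt_coord.
Qed.

Lemma is_uninorm_of_comm (V : R -> R -> R) (e : R) :
  (forall x y, in01 x -> in01 y -> in01 (V x y)) ->
  (forall x y, in01 x -> in01 y -> V x y = V y x) ->
  (forall x y z, in01 x -> in01 y -> in01 z -> V (V x y) z = V x (V y z)) ->
  (forall x1 x2 y, in01 x1 -> in01 x2 -> in01 y -> x1 <= x2 -> V x1 y <= V x2 y) ->
  in01 e -> (forall x, in01 x -> V e x = x) ->
  is_uninorm V e.
Proof.
  intros Hin Hcomm Hassoc Hmono He Hneut.
  split; [exact Hin|]; split; [exact Hcomm|]; split; [exact Hassoc|]; split; [exact Hmono|].
  split; [|split; [exact He|]].
  - intros x y1 y2 Hx H1 H2 H; rewrite (Hcomm x y1), (Hcomm x y2) by auto; auto.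
  - intros x Hx; rewrite (Hcomm x e) by auto; auto.
Qed.

Theorem mainTheorem12 : disjunctive_uninorm U (1/2).
Proof.
  split.
  - apply is_uninorm_of_comm.
    + exact U_in01.
    + exact U_comm.
    + exact U_assoc.
    + exact U_le_compat_l.
    + pieces.
    + exact U_half_l.
  - apply U_1_l; pieces.
Qed.
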